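(* Let $G$ be a finite simple graph with an edge $e=\{x,y\}\in E(G)$ such that $\deg(x)\le 2$ and $\deg(y)\le 2$. Then $M_2(G)$ is contractible.
   Context: A $2$-matching of a graph $G$ is a set of edges $H\subseteq E(G)$ such that every vertex has degree at most $2$ in $H$. The $2$-matching complex $M_2(G)$ is the simplicial complex whose vertices are the edges of $G$ and whose faces are the $2$-matchings of $G$. *)

From HB Require Import structures.
From mathcomp Require Import all_boot all_order all_algebra.
From mathcomp Require Import all_classical all_reals topology normedtype.
Import numFieldNormedType.Exports.
Set Implicit Arguments. Unset Strict Implicit. Unset Printing Implicit Defensive.
Import Order.TTheory GRing.Theory Num.Theory.
Local Open Scope ring_scope.

Definition simple_graph (T : finType) (G : rel T) : Prop :=
  symmetric G /\ irreflexive G.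

Definition is_edge (T : finType) (G : rel T) (e : {set T}) : bool :=
  [exists x, exists y, G x y && (e == [set x; y])].

Definition edges (T : finType) (G : rel T) : {set {set T}} :=
  [set e | is_edge G e].

Definition deg (T : finType) (G : rel T) (x : T) : nat := #|[set y | G x y]|.

Definition two_matching (T : finType) (G : rel T) (H : {set {set T}}) : bool :=
  (H \subset edges G) && [forall v, (#|[set f in H | v \in f]| <= 2)%N].

(* The 2-matching complex M_2(G), as the family of its faces (sets of
   vertices, the vertices being the edges of G). *)
Definition M2 (T : finType) (G : rel T) : pred {set {set T}} :=
  fun H => two_matching G H.

(* Standard geometric realization of a (finite abstract) simplicial complex
   K on the finite vertex type V, as a subspace of R^V:
   points are barycentric coordinate vectors whose support is a face. *)
Definition realization (R : realType) (V : finType) (K : pred {set V})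
  : set {ptws V -> R} :=
  (fun t => (forall v, 0 <= t v) /\ \sum_(v : V) t v = 1
           /\ K [set v | t v != 0]).

Definition contractible (R : realType) (X : topologicalType) (A : set X) : Prop :=
  exists x0 : X, A x0 /\
  exists H : R * X -> X,
    {within (fun p : R * X => 0 <= p.1 <= 1 /\ A p.2), continuous H}%classic
    /\ (forall p : R * X, 0 <= p.1 <= 1 -> A p.2 -> A (H p))
    /\ (forall x, A x -> H (0, x) = x /\ H (1, x) = x0).

Definition complex_contractible (R : realType) (V : finType) (K : pred {set V}) : Prop :=
  contractible R (@realization R V K).

(* The edge e = {x, y} can be added to any 2-matching without pushing a degree
   above 2, because x and y have at most two incident edges in all of G.  So
   M_2(G) is a cone with apex e, and the straight-line homotopy from a point of
   the realization to the vertex e stays inside the realization. *)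
From HB Require Import structures.
From mathcomp Require Import all_boot all_order all_algebra.
From mathcomp Require Import all_classical all_reals topology normedtype.
Import numFieldNormedType.Exports.
Set Implicit Arguments. Unset Strict Implicit. Unset Printing Implicit Defensive.
Import Order.TTheory GRing.Theory Num.Theory.
Local Open Scope ring_scope.

Section TwoMatchings.
Variables (T : finType) (G : rel T).

Lemma two_matching0 : two_matching G finset.set0.
Proof.
apply/andP; split; first exact: finset.sub0set.
apply/forallP => v.
suff -> : [set f : {set T} in finset.set0 | v \in f] = finset.set0 by rewrite cards0.
by apply/setP => f; rewrite !inE.
Qed.

Lemma two_matchingS (A B : {set {set T}}) :
  B \subset A -> two_matching G A -> two_matching G B.
Proof.
move=> sBA /andP[sAE /forallP degA]; apply/andP; split.
  exact: fintype.subset_trans sBA sAE.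
apply/forallP => v; apply: leq_trans (degA v); apply: subset_leq_card.
by apply/fintype.subsetP => f; rewrite !inE => /andP[/(fintype.subsetP sBA) -> ->].
Qed.

Lemma edge_pair (a b : T) : G a b -> [set a; b] \in edges G.
Proof.
by move=> Gab; rewrite inE; apply/existsP; exists a; apply/existsP; exists b; rewrite Gab eqxx.
Qed.

Lemma card_incident_le_deg (E : {set {set T}}) (v : T) :
  symmetric G -> E \subset edges G -> (#|[set f in E | v \in f]| <= deg G v)%N.
Proof.
move=> symG sEG; apply: leq_trans (leq_imset_card (fun w => [set v; w]) _).
apply: subset_leq_card; apply/fintype.subsetP => f; rewrite inE => /andP[fE vf].
have /existsP[a /existsP[b /andP[Gab /eqP def_f]]] : is_edge G f.
  by have := fintype.subsetP sEG f fE; rewrite inE.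
apply/imsetP; move: vf; rewrite def_f !inE => /orP[] /eqP ->.
  by exists b; rewrite ?inE.
by exists a; rewrite ?inE 1?symG // finset.setUC.
Qed.

Lemma two_matching_setU1_edge (x y : T) (A : {set {set T}}) :
  symmetric G -> G x y -> (deg G x <= 2)%N -> (deg G y <= 2)%N ->
  two_matching G A -> two_matching G ([set x; y] |: A).
Proof.
move=> symG Gxy degx degy /andP[sAE /forallP degA].
have sxyAE : [set x; y] |: A \subset edges G.
  by rewrite finset.subUset finset.sub1set edge_pair.
apply/andP; split => //; apply/forallP => v.
have [vxy | vNxy] := boolP (v \in [set x; y]).
  by move: vxy; rewrite !inE => /orP[] /eqP ->;
    apply: leq_trans (card_incident_le_deg _ symG sxyAE) _.
apply: leq_trans (degA v); apply: subset_leq_card; apply/fintype.subsetP => f.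
rewrite !inE => /andP[/orP[/eqP def_f | fA] vf]; last by rewrite fA vf.
by move: vNxy; rewrite -def_f vf.
Qed.

End TwoMatchings.

Local Open Scope classical_set_scope.

Lemma ptws_continuous (X : topologicalType) (V : choiceType) (R : realType)
    (f : X -> {ptws V -> R}) :
  (forall v, continuous (fun x => f x v)) -> continuous f.
Proof.
move=> fv_cont x; apply/(@pointwise_cvgP (discrete_topology V) R (f @ x) (f x)) => v.
exact: fv_cont.
Qed.

Definition straight_homotopy (V : choiceType) (R : realType) (p : {ptws V -> R})
    (st : R * {ptws V -> R}) : {ptws V -> R} :=
  fun v => (1 - st.1) * st.2 v + st.1 * p v.

Lemma straight_homotopy_continuous (V : choiceType) (R : realType) (p : {ptws V -> R}) :
  continuous (straight_homotopy p).
Proof.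
apply: ptws_continuous => v st; rewrite /straight_homotopy /continuous_at.
(* Without this instance in the context, [cvg_fst] below sends unification into a
   practically endless search. *)
have nbhs_st_filter : Filter (nbhs st) by exact: nbhs_filter.
have fst_cvg : fst @ st --> st.1 by exact: cvg_fst.
have snd_v_cvg : (fun q : R * {ptws V -> R} => q.2 v) @ st --> st.2 v.
  exact: cvg_comp _ _ (cvg_snd : snd @ st --> st.2)
                     (@proj_continuous V (fun _ => R) v st.2).
have one_cvg : cst 1 @ st --> (1 : R) by exact: cvg_cst.
have p_cvg : cst (p v) @ st --> p v by exact: cvg_cst.
exact: cvgD (cvgM (cvgB one_cvg fst_cvg) snd_v_cvg) (cvgM fst_cvg p_cvg).
Qed.

Local Close Scope classical_set_scope.

Lemma support_straight_homotopy (V : finType) (R : realType) (p t : {ptws V -> R}) (s : R) :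
  [set v | straight_homotopy p (s, t) v != 0]
    \subset [set v | t v != 0] :|: [set v | p v != 0].
Proof.
apply/fintype.subsetP => v; rewrite !inE /straight_homotopy /=.
by apply: contraR; rewrite negb_or !negbK => /andP[/eqP -> /eqP ->]; rewrite !mulr0 addr0.
Qed.

Section ConeContractible.
Variables (R : realType) (V : finType) (K : pred {set V}) (a : V).
Hypothesis K0 : K finset.set0.
Hypothesis K_subset : forall A B : {set V}, B \subset A -> K A -> K B.
Hypothesis K_cone : forall A : {set V}, K A -> K (a |: A).

Definition vertex_point : {ptws V -> R} := fun v => (v == a)%:R.

Lemma support_vertex_point : [set v | vertex_point v != 0] = [set a].
Proof. by apply/setP => v; rewrite !inE /vertex_point pnatr_eq0 eqb0 negbK. Qed.

Lemma sum_vertex_point : \sum_v vertex_point v = 1.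
Proof.
rewrite (bigD1 a) //= big1 ?addr0 => [|v /negbTE va]; by rewrite /vertex_point ?eqxx ?va.
Qed.

Lemma realization_vertex_point : realization K vertex_point.
Proof.
split=> [v|]; first by rewrite /vertex_point ler0n.
rewrite sum_vertex_point support_vertex_point -[[set a]]finset.setU0.
by split=> //; exact: K_cone.
Qed.

Lemma realization_straight_homotopy (s : R) (t : {ptws V -> R}) :
  0 <= s <= 1 -> realization K t -> realization K (straight_homotopy vertex_point (s, t)).
Proof.
move=> /andP[s_ge0 s_le1] [t_ge0 [t_sum t_face]]; rewrite /straight_homotopy /=.
split=> [v|]; first by rewrite addr_ge0 ?mulr_ge0 ?subr_ge0 ?ler0n.
split; first by rewrite big_split /= -!mulr_sumr t_sum sum_vertex_point !mulr1 subrK.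
apply: K_subset (K_cone t_face).
by rewrite finset.setUC -support_vertex_point; exact: support_straight_homotopy.
Qed.

Lemma cone_complex_contractible : complex_contractible R K.
Proof.
exists vertex_point; split; first exact: realization_vertex_point.
exists (straight_homotopy vertex_point); split.
  by apply: continuous_subspaceT; exact: straight_homotopy_continuous.
split=> [[s t] /= |t _]; first exact: realization_straight_homotopy.
split; apply/funext => v; rewrite /straight_homotopy /=.
  by rewrite subr0 mul1r mul0r addr0.
by rewrite subrr mul0r mul1r add0r.
Qed.

End ConeContractible.

Theorem mainTheorem6 (R : realType) (T : finType) (G : rel T) (x y : T) :
  simple_graph G -> G x y ->
  (deg G x <= 2)%N -> (deg G y <= 2)%N ->
  complex_contractible R (M2 G).
Proof.
move=> [symG _] Gxy degx degy.
apply: (@cone_complex_contractible R _ _ [set x; y]) => [|A B|A].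
- exact: two_matching0.
- exact: two_matchingS.
- exact: two_matching_setU1_edge.
Qed.
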